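(* Let $L$ be a totally ordered normal incline and let $A$ be a $3\times 3$ completely positive matrix over $L$. Then $A$ is LU-completely positive or UL-completely positive (or both).
   Context: An incline is a nonempty set $L$ with binary operations $\oplus,\otimes$ such that $(L,\oplus)$ is a semilattice ($\oplus$ associative, commutative, idempotent), $(L,\otimes)$ is a semigroup, $x\otimes(y\oplus z)=(x\otimes y)\oplus(x\otimes z)$ and $x\oplus(x\otimes y)=x$ for all $x,y,z$. The order is $x\le y\iff x\oplus y=y$; $L$ is totally ordered if this order is total, and commutative if $\otimes$ is commutative. An r-ideal is a nonempty $J\subseteq L$ closed under $\oplus$ and under multiplication by arbitrary elements of $L$; a lattice ideal is a nonempty $J\subseteq L$ closed under $\oplus$ and downward closed. A commutative incline $L$ is normal if it has an additive identity $\mathbf{0}$ and a multiplicative identity $\mathbf{1}$ and: every singly generated r-ideal is a lattice ideal (LI-property); for each $x$ there is a unique $c$ with $c\otimes c=x$; $x\otimes y\le(x\otimes x)\oplus(y\otimes y)$ for all $x,y$. Matrix product: $(BC)_{ij}=\bigoplus_k b_{ik}\otimes c_{kj}$; $B^T$ is the transpose. $A$ is completely positive if $A=BB^T$ for some $3\times k$ matrix $B$ over $L$ all of whose entries are of the form $c\otimes c$. $A$ is UL-completely positive if $A=UU^T$ for some upper triangular matrix $U$ over $L$, and LU-completely positive if $A=CC^T$ for some lower triangular matrix $C$ over $L$. *)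

From mathcomp Require Import all_boot all_algebra.
Set Implicit Arguments. Unset Strict Implicit. Unset Printing Implicit Defensive.

Record incline := Incline {
  icar :> Type;
  iadd : icar -> icar -> icar;
  imul : icar -> icar -> icar;
  iaddA : forall x y z, iadd x (iadd y z) = iadd (iadd x y) z;
  iaddC : forall x y, iadd x y = iadd y x;
  iaddI : forall x, iadd x x = x;
  imulA : forall x y z, imul x (imul y z) = imul (imul x y) z;
  imulDr : forall x y z, imul x (iadd y z) = iadd (imul x y) (imul x z);
  iabsorb : forall x y, iadd x (imul x y) = x;
  inhabited_incline : inhabited icar
}.

Section InclineDefs.
Variable L : incline.

Definition ile (x y : L) : Prop := iadd x y = y.

Definition totally_ordered : Prop := forall x y : L, ile x y \/ ile y x.

Definition commutative_incline : Prop := forall x y : L, imul x y = imul y x.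

Definition r_ideal (J : L -> Prop) : Prop :=
  (exists x, J x) /\
  (forall x y, J x -> J y -> J (iadd x y)) /\
  (forall r x, J x -> J (imul r x) /\ J (imul x r)).

Definition lattice_ideal (J : L -> Prop) : Prop :=
  (exists x, J x) /\
  (forall x y, J x -> J y -> J (iadd x y)) /\
  (forall x y, ile y x -> J x -> J y).

Definition r_ideal_gen (a : L) : L -> Prop :=
  fun x => forall J, r_ideal J -> J a -> J x.

Definition LI_property : Prop := forall a : L, lattice_ideal (r_ideal_gen a).

Definition additive_identity (z : L) : Prop := forall x, iadd x z = x.
Definition multiplicative_identity (o : L) : Prop :=
  forall x, imul o x = x /\ imul x o = x.

Definition normal_incline : Prop :=
  commutative_incline /\
  (exists z : L, additive_identity z) /\
  (exists o : L, multiplicative_identity o) /\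
  LI_property /\
  (forall x : L, exists! c : L, imul c c = x) /\
  (forall x y : L, ile (imul x y) (iadd (imul x x) (imul y y))).

(* Matrix product over L: (BC)_{ij} = (+)_k b_ik (x) c_kj. The empty sum is
   interpreted as the given element z (the additive identity 0). *)
Definition imxmul (z : L) (m n p : nat) (B : 'M[L]_(m, n)) (C : 'M[L]_(n, p))
  : 'M[L]_(m, p) :=
  \matrix_(i, j) \big[@iadd L / z]_(k < n) imul (B i k) (C k j).

Definition is_square (x : L) : Prop := exists c : L, x = imul c c.

Definition completely_positive (z : L) (A : 'M[L]_3) : Prop :=
  exists (k : nat) (B : 'M[L]_(3, k)),
    (forall i j, is_square (B i j)) /\ A = imxmul z B B^T.

Definition upper_triangular (z : L) (n : nat) (U : 'M[L]_n) : Prop :=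
  forall i j : 'I_n, (j < i)%N -> U i j = z.

Definition lower_triangular (z : L) (n : nat) (C : 'M[L]_n) : Prop :=
  forall i j : 'I_n, (i < j)%N -> C i j = z.

Definition UL_completely_positive (z : L) (A : 'M[L]_3) : Prop :=
  exists U : 'M[L]_3, upper_triangular z U /\ A = imxmul z U U^T.

Definition LU_completely_positive (z : L) (A : 'M[L]_3) : Prop :=
  exists C : 'M[L]_3, lower_triangular z C /\ A = imxmul z C C^T.

End InclineDefs.

(* Since L is totally ordered and squaring is injective, every entry b of a
   Gram factor B satisfies b <= sqrt(A_ii) for its row i, so A_ij <= s_i s_j
   with s_i = sqrt(A_ii); the LI-property then writes A_ij = s_i s_j t_ij.
   Such a matrix is C C^T for the triangular C with diagonal s_i and entries
   s_i t_ij below (resp. above) the diagonal, provided t_ik t_jk <= t_ij along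
   every chain k < j < i (resp. i < j < k). For n = 3 there is one chain each
   way, and comparing t_10 with t_21 shows that one of the two conditions
   holds, because products are below their factors. *)
From mathcomp Require Import all_boot all_algebra zify.

Set Implicit Arguments.
Unset Strict Implicit.
Unset Printing Implicit Defensive.

Local Notation "x ⊕ y" := (iadd x y) (at level 50, left associativity).
Local Notation "x ⊗ y" := (imul x y) (at level 40, left associativity).
Local Notation "x ≼ y" := (ile x y) (at level 70, no associativity).

Section InclineOrder.
Variable L : incline.
Implicit Types x y w : L.

Lemma ile_refl x : x ≼ x.
Proof. exact: iaddI. Qed.

Lemma ile_trans y x w : x ≼ y -> y ≼ w -> x ≼ w.
Proof. by rewrite /ile => xy yw; rewrite -yw iaddA xy. Qed.

Lemma ile_anti x y : x ≼ y -> y ≼ x -> x = y.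
Proof. by rewrite /ile => xy yx; rewrite -yx iaddC xy. Qed.

Lemma iadd_ile x y w : x ≼ w -> y ≼ w -> x ⊕ y ≼ w.
Proof. by rewrite /ile => xw yw; rewrite -iaddA yw xw. Qed.

Lemma ile_mulr x y : x ⊗ y ≼ x.
Proof. by rewrite /ile iaddC iabsorb. Qed.

Lemma ile_mul2l w x y : x ≼ y -> w ⊗ x ≼ w ⊗ y.
Proof. by rewrite /ile -imulDr => ->. Qed.

Section AdditiveIdentity.
Variable z : L.
Hypothesis z_id : additive_identity z.

Lemma zero_ile x : z ≼ x.
Proof. by rewrite /ile iaddC z_id. Qed.

Lemma imul0i x : z ⊗ x = z.
Proof. exact: ile_anti (ile_mulr _ _) (zero_ile _). Qed.

Lemma ile_bigsum (I : eqType) (r : seq I) (F : I -> L) k :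
  k \in r -> F k ≼ \big[@iadd L/z]_(i <- r) F i.
Proof.
elim: r => //= a r IHr; rewrite in_cons big_cons => /predU1P[->|/IHr kr].
  by rewrite /ile iaddA iaddI.
by apply: ile_trans kr _; rewrite /ile iaddC -iaddA iaddI.
Qed.

Lemma bigsum_ile (I : Type) (r : seq I) (F : I -> L) w :
  (forall i, F i ≼ w) -> \big[@iadd L/z]_(i <- r) F i ≼ w.
Proof.
move=> Fw; elim: r => [|a r IHr]; first by rewrite big_nil; apply: zero_ile.
by rewrite big_cons; apply: iadd_ile.
Qed.

Lemma bigsum_max (I : finType) (F : I -> L) k w :
  (forall i, F i ≼ w) -> F k = w -> \big[@iadd L/z]_i F i = w.
Proof.
move=> Fw Fk; apply: ile_anti; first exact: bigsum_ile Fw.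
by rewrite -Fk; apply: ile_bigsum; rewrite mem_index_enum.
Qed.

End AdditiveIdentity.

Section Commutative.
Hypothesis mulC : commutative_incline L.

Lemma ile_mul2r w x y : x ≼ y -> x ⊗ w ≼ y ⊗ w.
Proof. by rewrite !(mulC _ w); apply: ile_mul2l. Qed.

Lemma ile_mul2 x y x' y' : x ≼ y -> x' ≼ y' -> x ⊗ x' ≼ y ⊗ y'.
Proof.
by move=> xy xy'; apply: ile_trans (ile_mul2l _ xy') (ile_mul2r _ xy).
Qed.

Lemma imulACA x y x' y' : (x ⊗ y) ⊗ (x' ⊗ y') = (x ⊗ x') ⊗ (y ⊗ y').
Proof. by rewrite -!imulA (imulA y) (mulC y x') -imulA. Qed.

Lemma imuli0 z x : additive_identity z -> x ⊗ z = z.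
Proof. by move=> z_id; rewrite mulC imul0i. Qed.

Lemma sqrt_ile x y :
  totally_ordered L -> (forall x y, x ⊗ x = y ⊗ y -> x = y) ->
  x ⊗ x ≼ y ⊗ y -> x ≼ y.
Proof.
move=> tot sq_inj xy; have [//|yx] := tot x y.
suff -> : x = y by apply: ile_refl.
by apply/sq_inj/ile_anti => //; apply: ile_mul2.
Qed.

(* The set of multiples of a is an r-ideal containing a = a ⊗ o, hence
   contains the lattice ideal generated by a. *)
Lemma ile_divides (o a x : L) :
  multiplicative_identity o -> LI_property L -> x ≼ a -> exists r, x = a ⊗ r.
Proof.
move=> o_id LI xa; have [_ [_ LI_down]] := LI a.
have a_ao : a = a ⊗ o by case: (o_id a).
pose multiples u := exists r, u = a ⊗ r.
apply: (LI_down a x xa (fun J _ Ja => Ja) multiples); last by exists o.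
split; first by exists a, o.
split=> [_ _ [r ->] [r' ->]|r' _ [r ->]].
  by exists (r ⊕ r'); rewrite imulDr.
by split; exists (r ⊗ r'); rewrite -?imulA // mulC -imulA.
Qed.

End Commutative.
End InclineOrder.

Section Gram.
Variables (L : incline) (z : L).
Hypothesis mulC : commutative_incline L.
Variables (n k : nat) (B : 'M[L]_(n, k)).
Local Notation G := (imxmul z B B^T).

Lemma gramE i j : G i j = \big[@iadd L/z]_(l < k) (B i l ⊗ B j l).
Proof. by rewrite mxE; apply: eq_bigr => l _; rewrite mxE. Qed.

Lemma gram_sym i j : G i j = G j i.
Proof. by rewrite !gramE; apply: eq_bigr => l _; apply: mulC. Qed.

Lemma gram_ile_sqrt (s : 'I_n -> L) i j :
  additive_identity z -> totally_ordered L ->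
  (forall x y : L, x ⊗ x = y ⊗ y -> x = y) ->
  (forall i, G i i = s i ⊗ s i) -> G i j ≼ s i ⊗ s j.
Proof.
move=> z_id tot sq_inj sG; rewrite gramE; apply: bigsum_ile => // l.
have B_ile m : B m l ≼ s m.
  by apply: sqrt_ile => //; rewrite -sG gramE; apply/ile_bigsum/mem_index_enum.
exact: ile_mul2.
Qed.

End Gram.

Section TriangularFactor.
Variables (L : incline) (z : L).
Hypotheses (mulC : commutative_incline L) (z_id : additive_identity z).
Variables (n : nat) (A : 'M[L]_n) (s : 'I_n -> L) (t : 'I_n -> 'I_n -> L).
Variable r : rel 'I_n.
Hypotheses (r_irr : irreflexive r) (r_trans : transitive r).
Hypothesis r_total : forall i j, i != j -> r i j || r j i.
Hypothesis A_sym : forall i j, A i j = A j i.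
Hypothesis A_diag : forall i, A i i = s i ⊗ s i.
Hypothesis A_below : forall i j, r j i -> A i j = s i ⊗ s j ⊗ t i j.
Hypothesis t_chain : forall i j k, r k j -> r j i -> t i k ⊗ t j k ≼ t i j.

Definition tri_factor : 'M[L]_n :=
  \matrix_(i, j) if r j i then s i ⊗ t i j else if j == i then s i else z.

Local Notation C := tri_factor.

Lemma tri_factor_diag i : C i i = s i.
Proof. by rewrite mxE r_irr eqxx. Qed.

Lemma tri_factor_below i j : r j i -> C i j = s i ⊗ t i j.
Proof. by rewrite mxE => ->. Qed.

Lemma tri_factor_above i j : j != i -> ~~ r j i -> C i j = z.
Proof. by rewrite mxE => /negPf-> /negPf->. Qed.

(* The column l = j carries the whole entry (i, j); every other column
   contributes less, by t_chain below the diagonal and absorption on it. *)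
Lemma tri_factor_gram : A = imxmul z C C^T.
Proof.
apply/matrixP=> i j.
wlog ji : i j / (j == i) || r j i.
  move=> IH; have [|/norP[ji nji]] := boolP ((j == i) || r j i).
    exact: IH.
  rewrite A_sym (gram_sym _ mulC) IH //.
  by move: (r_total ji); rewrite (negPf nji) /= => ->; rewrite orbT.
have C_jj : C i j ⊗ C j j = A i j.
  rewrite tri_factor_diag; case/orP: ji => [/eqP->|ji].
    by rewrite tri_factor_diag A_diag.
  by rewrite tri_factor_below // A_below // -imulA (mulC (t i j)) imulA.
rewrite gramE; apply/esym/(bigsum_max z_id (k := j)) => [l|]; last exact: C_jj.
have [lj|] := boolP (r l j); last first.
  have [/eqP-> _|lj nlj] := boolP (l == j).
    by rewrite C_jj; apply: ile_refl.
  by rewrite (tri_factor_above lj) // imuli0 //; apply: zero_ile.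
have li : r l i by case/orP: ji => [/eqP<-|/(r_trans lj)].
rewrite !tri_factor_below // imulACA //; case/orP: ji => [/eqP ji|ji].
  by rewrite ji A_diag; apply: ile_mulr.
by rewrite A_below //; apply/ile_mul2l/t_chain.
Qed.

End TriangularFactor.

Lemma tri_factor_lower (L : incline) (z : L) n (s : 'I_n -> L) t :
  lower_triangular z (tri_factor z s t (fun i j : 'I_n => i < j)).
Proof.
move=> i j ij; rewrite tri_factor_above -?leqNgt ?(ltnW ij) //.
by apply: contraTneq ij => ->; rewrite ltnn.
Qed.

Lemma tri_factor_upper (L : incline) (z : L) n (s : 'I_n -> L) t :
  upper_triangular z (tri_factor z s t (fun i j : 'I_n => j < i)).
Proof.
move=> i j ji; rewrite tri_factor_above -?leqNgt ?(ltnW ji) //.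
by apply: contraTneq ji => ->; rewrite ltnn.
Qed.

Section ThreeByThree.
Variables (L : incline) (z : L).
Hypotheses (mulC : commutative_incline L) (z_id : additive_identity z).
Variables (A : 'M[L]_3) (s : 'I_3 -> L) (t : 'I_3 -> 'I_3 -> L).
Hypothesis A_sym : forall i j, A i j = A j i.
Hypothesis A_diag : forall i, A i i = s i ⊗ s i.
Hypothesis A_offdiag : forall i j, A i j = s i ⊗ s j ⊗ t i j.

Lemma LU_cp_of_chain :
  t 2%R 0%R ⊗ t 1%R 0%R ≼ t 2%R 1%R -> LU_completely_positive z A.
Proof.
move=> t_chain; exists (tri_factor z s t (fun i j : 'I_3 => i < j)).
split; first exact: tri_factor_lower.
apply: tri_factor_gram => // [i|i j k|i j|i j k kj ji]; first exact: ltnn.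
- exact: ltn_trans.
- by rewrite -neq_ltn.
have [-> -> ->] : [/\ i = 2%R, j = 1%R & k = 0%R].
  by have := ltn_ord i; split; apply/val_inj => /=; lia.
exact: t_chain.
Qed.

Lemma UL_cp_of_chain :
  t 2%R 0%R ⊗ t 2%R 1%R ≼ t 1%R 0%R -> UL_completely_positive z A.
Proof.
move=> t_chain.
exists (tri_factor z s (fun i j => t j i) (fun i j : 'I_3 => j < i)).
split; first exact: tri_factor_upper.
apply: tri_factor_gram => // [i|i j k ij jk|i j|i j _|i j k jk ij].
- exact: ltnn.
- exact: ltn_trans jk ij.
- by rewrite orbC -neq_ltn.
- by rewrite A_sym A_offdiag (mulC (s j)).
have [-> -> ->] : [/\ i = 0%R, j = 1%R & k = 2%R].
  by have := ltn_ord k; split; apply/val_inj => /=; lia.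
exact: t_chain.
Qed.

End ThreeByThree.

Theorem mainTheorem10 (L : incline) (z : L) (A : 'M[L]_3) :
  totally_ordered L ->
  normal_incline L ->
  additive_identity z ->
  completely_positive z A ->
  LU_completely_positive z A \/ UL_completely_positive z A.
Proof.
move=> tot [mulC [_ [[o o_id] [LI [sqrt _]]]]] z_id [k [B [_ ->]]].
set G := imxmul z B B^T.
have sq_inj (x y : L) : x ⊗ x = y ⊗ y -> x = y.
  move=> xy; have [c [_ c_uniq]] := sqrt (y ⊗ y).
  by rewrite -(c_uniq x xy); apply: c_uniq.
have /fin_all_exists[s sG] (i : 'I_3) : exists c, G i i = c ⊗ c.
  by have [c [<- _]] := sqrt (G i i); exists c.
have /fin_all_exists[t Gt] (i : 'I_3) :
    exists ti : 'I_3 -> L, forall j, G i j = s i ⊗ s j ⊗ ti j.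
  apply: (fin_all_exists (P := fun j r => G i j = s i ⊗ s j ⊗ r)) => j.
  exact: (ile_divides mulC o_id LI (gram_ile_sqrt mulC i j z_id tot sq_inj sG)).
have G_sym := gram_sym z mulC B.
have [t_le|t_le] := tot (t 1%R 0%R) (t 2%R 1%R); [left|right].
- apply: LU_cp_of_chain => //; apply: ile_trans t_le.
  by rewrite mulC; apply: ile_mulr.
- apply: UL_cp_of_chain => //; apply: ile_trans t_le.
  by rewrite mulC; apply: ile_mulr.
Qed.
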